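(* Let $(R,\mathfrak{m})$ be a Noetherian local domain, let $J$ be an integrally closed $\mathfrak{m}$-primary ideal of $R$, and let $I$ be an ideal containing $J$. If $M$ is a finitely generated torsion-free $R$-module, then $$\ell(IM/JM)\geq \overline{\ell}(I/J)\cdot\operatorname{rank} M.$$
   Context: For ideals $J\subseteq I$, $\overline{\ell}(I/J)$ denotes the length of the longest chain of integrally closed ideals between $J$ and $I$. $\ell(\cdot)$ denotes length. *)

From HB Require Import structures.
From mathcomp Require Import all_boot all_order all_algebra.
From mathcomp Require Import boolp classical_sets constructive_ereal ereal.
Set Implicit Arguments. Unset Strict Implicit. Unset Printing Implicit Defensive.
Import Order.TTheory GRing.Theory Num.Theory.
Local Open Scope ring_scope.

Section CommAlg.
Variable R : idomainType.

Definition is_ideal (I : R -> Prop) : Prop :=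
  [/\ I 0, (forall x y, I x -> I y -> I (x + y)) & (forall r x, I x -> I (r * x))].

Definition psubset {T} (A B : T -> Prop) : Prop := forall x, A x -> B x.
Definition pequiv {T} (A B : T -> Prop) : Prop := forall x, A x <-> B x.
Definition pstrict {T} (A B : T -> Prop) : Prop :=
  psubset A B /\ exists x, B x /\ ~ A x.

Definition is_maximal_ideal (m : R -> Prop) : Prop :=
  [/\ is_ideal m, ~ m 1 &
      forall I, is_ideal I -> psubset m I -> pequiv I m \/ I 1].

Definition noetherian : Prop :=
  forall f : nat -> R -> Prop, (forall n, is_ideal (f n)) ->
    (forall n, psubset (f n) (f n.+1)) ->
    exists N, forall n, (N <= n)%N -> pequiv (f n) (f N).

Definition local_with (m : R -> Prop) : Prop :=
  is_maximal_ideal m /\ forall n, is_maximal_ideal n -> pequiv n m.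

Definition radical (J : R -> Prop) : R -> Prop := fun x => exists n, J (x ^+ n).

Definition is_primary (J : R -> Prop) : Prop :=
  [/\ is_ideal J, ~ J 1 &
      forall x y, J (x * y) -> ~ J x -> radical J y].

Definition m_primary (m J : R -> Prop) : Prop :=
  is_primary J /\ pequiv (radical J) m.

Definition ideal_mul (I J : R -> Prop) : R -> Prop := fun x =>
  exists s : seq (R * R), (forall p, p \in s -> I p.1 /\ J p.2) /\
    x = \sum_(p <- s) p.1 * p.2.

Fixpoint ideal_pow (I : R -> Prop) (n : nat) : R -> Prop :=
  match n with
  | 0 => fun _ => True
  | n'.+1 => ideal_mul (ideal_pow I n') I
  end.

Definition integral_over_ideal (I : R -> Prop) (x : R) : Prop :=
  exists n : nat, exists a : nat -> R, (0 < n)%N /\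
    (forall i, (1 <= i <= n)%N -> ideal_pow I i (a i)) /\
    x ^+ n + \sum_(1 <= i < n.+1) a i * x ^+ (n - i) = 0.

Definition integrally_closed_ideal (I : R -> Prop) : Prop :=
  is_ideal I /\ forall x, integral_over_ideal I x -> I x.

(* supremum (in the extended rationals (only naturals and +oo, -oo occur)) of a set of natural numbers *)
Definition nat_sup (P : nat -> Prop) : \bar rat :=
  ereal_sup [set ((n%:R : rat)%:E)%E | n in P].

(* \bar{l}(I/J): longest chain I_0 ⊊ I_1 ⊊ ... ⊊ I_k of integrally closed
   ideals with J ⊆ I_0 and I_k ⊆ I; its length is k. *)
Definition icl_chain_length (I J : R -> Prop) : \bar rat :=
  nat_sup (fun k => exists C : nat -> R -> Prop,
    (forall i, (i <= k)%N -> integrally_closed_ideal (C i)) /\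
    psubset J (C 0%N) /\ psubset (C k) I /\
    (forall i, (i < k)%N -> pstrict (C i) (C i.+1))).

Variable M : lmodType R.

Definition is_submodule (N : M -> Prop) : Prop :=
  [/\ N 0, (forall x y, N x -> N y -> N (x + y)) &
      (forall (r : R) x, N x -> N (r *: x))].

Definition ideal_smul (I : R -> Prop) : M -> Prop := fun x =>
  exists s : seq (R * M), (forall p, p \in s -> I p.1) /\
    x = \sum_(p <- s) p.1 *: p.2.

(* l(A/B) for submodules B ⊆ A, via the correspondence theorem: the supremum
   of lengths k of chains of submodules N_0 ⊊ ... ⊊ N_k with B ⊆ N_0, N_k ⊆ A *)
Definition quot_length (A B : M -> Prop) : \bar rat :=
  nat_sup (fun k => exists N : nat -> M -> Prop,
    (forall i, (i <= k)%N -> is_submodule (N i)) /\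
    psubset B (N 0%N) /\ psubset (N k) A /\
    (forall i, (i < k)%N -> pstrict (N i) (N i.+1))).

Definition fin_gen_module : Prop :=
  exists s : seq M, forall x : M, exists c : 'I_(size s) -> R,
    x = \sum_(i < size s) c i *: s`_i.

Definition torsion_free : Prop :=
  forall (r : R) (x : M), r *: x = 0 -> r = 0 \/ x = 0.

Definition lin_indep (n : nat) (v : 'I_n -> M) : Prop :=
  forall c : 'I_n -> R, \sum_(i < n) c i *: v i = 0 -> forall i, c i = 0.

(* rank of M over the domain R: maximal number of R-linearly independent
   elements (= dim_K (K ⊗_R M), K = Frac R) *)
Definition module_rank : \bar rat :=
  nat_sup (fun n => exists v : 'I_n -> M, lin_indep v).

End CommAlg.

(* Let J ⊆ C_0 ⊊ C_1 ⊊ ... ⊊ C_k ⊆ I be integrally closed ideals and let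
   v_0, ..., v_(n-1) be independent in M.  Each step C ⊊ C' refines to a strict
   chain of n submodules from C M to C' M: for x in C' \ C choose y_0, y_1, ...
   with x y_j outside C M + x (R y_0 + ... + R y_(j-1)).  If no such y_j existed,
   the determinant trick would give e = χ(x), χ the characteristic polynomial of
   a matrix with entries in C, such that e M lies in a module generated by j < n
   elements; e <> 0 since x is not integral over C, so the e v_i are dependent.
   Concatenating the refinements gives a chain of length k n from J M to I M. *)

From HB Require Import structures.
From mathcomp Require Import all_boot all_order all_algebra.
From mathcomp Require Import boolp classical_sets constructive_ereal ereal.
From mathcomp Require Import zify perm.
Set Implicit Arguments. Unset Strict Implicit. Unset Printing Implicit Defensive.
Import Order.TTheory GRing.Theory Num.Theory.
Local Open Scope ring_scope.

Section IdealPowers.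
Variable R : idomainType.
Implicit Types (I : R -> Prop) (x y : R).

Lemma ideal_sum I (T : Type) (r : seq T) (P : pred T) (F : T -> R) :
  is_ideal I -> (forall i, P i -> I (F i)) -> I (\sum_(i <- r | P i) F i).
Proof. by case=> I0 ID _ HF; apply: big_ind. Qed.

Lemma ideal_mul_is_ideal I I' : is_ideal I -> is_ideal (ideal_mul I I').
Proof.
case=> _ _ IM; split.
- by exists [::]; rewrite big_nil.
- move=> _ _ [s [Hs ->]] [t [Ht ->]]; exists (s ++ t); rewrite big_cat.
  by split=> // p; rewrite mem_cat => /orP[/Hs|/Ht].
- move=> r _ [s [Hs ->]]; exists [seq (r * p.1, p.2) | p <- s]; split.
    by move=> _ /mapP[q /Hs [Hq1 Hq2] ->]; split=> //; apply: IM.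
  by rewrite big_map mulr_sumr; apply: eq_bigr => p _; rewrite mulrA.
Qed.

Lemma ideal_pow_is_ideal I n : is_ideal (ideal_pow I n).
Proof. by elim: n => [|n IH]; [split | apply: ideal_mul_is_ideal]. Qed.

Lemma ideal_pow1 I x : I x -> ideal_pow I 1 x.
Proof.
move=> Ix; exists [:: (1, x)]; rewrite big_seq1 mul1r.
by split=> // p; rewrite inE => /eqP ->.
Qed.

Lemma ideal_powD_mul I a b x y :
  ideal_pow I a x -> ideal_pow I b y -> ideal_pow I (a + b) (x * y).
Proof.
elim: b y => [|b IH] y Ix.
  by rewrite addn0 mulrC => _; case: (ideal_pow_is_ideal I a) => _ _; apply.
move=> [s [Hs ->]]; rewrite addnS; exists [seq (x * p.1, p.2) | p <- s]; split.
  by move=> _ /mapP[q /Hs [Hq1 Hq2] ->]; split=> //; apply: IH.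
by rewrite big_map mulr_sumr; apply: eq_bigr => p _; rewrite mulrA.
Qed.

Lemma ideal_pow_le I a b x : (a <= b)%N -> ideal_pow I b x -> ideal_pow I a x.
Proof.
elim: b x => [|b IH] x; first by rewrite leqn0 => /eqP ->.
rewrite leq_eqVlt => /orP[/eqP -> //|]; rewrite ltnS => ab [s [Hs ->]].
apply: IH => //; rewrite big_seq; apply: ideal_sum; first exact: ideal_pow_is_ideal.
move=> p /Hs [Hp1 _]; rewrite mulrC.
by case: (ideal_pow_is_ideal I b) => _ _; apply.
Qed.

(* [d - k] is truncated: coefficients of degree above [d] are unconstrained. *)
Definition pweight I d (p : {poly R}) : Prop := forall k, ideal_pow I (d - k) p`_k.

Lemma pweight0 I d : pweight I d 0.
Proof. by move=> k; rewrite coef0; case: (ideal_pow_is_ideal I (d - k)). Qed.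

Lemma pweight1 I : pweight I 0 1.
Proof. by move=> k; rewrite sub0n. Qed.

Lemma pweightD I d p q : pweight I d p -> pweight I d q -> pweight I d (p + q).
Proof.
by move=> Hp Hq k; rewrite coefD; case: (ideal_pow_is_ideal I (d - k)) => _ + _; apply.
Qed.

Lemma pweightN I d p : pweight I d p -> pweight I d (- p).
Proof.
by move=> Hp k; rewrite coefN -mulN1r; case: (ideal_pow_is_ideal I (d - k)) => _ _; apply.
Qed.

Lemma pweightM I d e p q : pweight I d p -> pweight I e q -> pweight I (d + e) (p * q).
Proof.
move=> Hp Hq k; rewrite coefM; apply: ideal_sum; first exact: ideal_pow_is_ideal.
move=> [i /= ik] _; rewrite ltnS in ik.
apply: (@ideal_pow_le I _ ((d - i) + (e - (k - i)))%N); first lia.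
exact: ideal_powD_mul.
Qed.

Lemma pweight_sum I d (T : finType) (F : T -> {poly R}) :
  (forall i, pweight I d (F i)) -> pweight I d (\sum_i F i).
Proof. by move=> HF; apply: big_ind => //; [apply: pweight0 | apply: pweightD]. Qed.

Lemma pweight_prod I m (F : 'I_m -> {poly R}) :
  (forall i, pweight I 1 (F i)) -> pweight I m (\prod_i F i).
Proof.
elim: m F => [|m IH] F HF; first by rewrite big_ord0; apply: pweight1.
have := pweightM (IH _ (fun i => HF (widen_ord (leqnSn m) i))) (HF ord_max).
by rewrite addn1 -big_ord_recr.
Qed.

Lemma pweight_char_poly I m (A : 'M[R]_m) :
  is_ideal I -> (forall i j, I (A i j)) -> pweight I m (char_poly A).
Proof.
move=> HI HA; rewrite /char_poly /determinant; apply: pweight_sum => s.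
have Hprod : pweight I m (\prod_i char_poly_mx A i (s i)).
  apply: pweight_prod => i [|k]; last by rewrite !mxE coefB coefMn coefX coefC subSS.
  rewrite !mxE coefB coefMn coefX coefC mul0rn sub0r; apply: ideal_pow1.
  by case: HI => _ _ IM; rewrite -mulN1r; apply: IM.
by case: (odd_perm s); rewrite ?expr1 ?expr0 ?mulN1r ?mul1r //; apply: pweightN.
Qed.

Lemma root_char_poly_integral I m (A : 'M[R]_m) x :
  is_ideal I -> (forall i j, I (A i j)) -> (char_poly A).[x] = 0 ->
  integral_over_ideal I x.
Proof.
move=> HI; case: m A => [A _|m A HA] Ax0.
  by move/eqP: Ax0; rewrite /char_poly det_mx00 hornerC oner_eq0.
set p := char_poly A.
have size_p : size p = m.+2 by rewrite size_char_poly.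
have p_m : p`_m.+1 = 1.
  by have := char_poly_monic A; rewrite monicE lead_coefE size_p => /eqP.
exists m.+1, (fun i => p`_(m.+1 - i)); split=> //; split.
  by move=> i /andP[i1 im]; have := pweight_char_poly HI HA (m.+1 - i)%N; rewrite subKn.
rewrite -[RHS]Ax0 horner_coef size_p big_ord_recr /= p_m mul1r addrC; congr (_ + _).
rewrite big_add1 -(big_mkord xpredT (fun i => p`_i * x ^+ i)) [RHS]big_nat_rev.
by apply: eq_bigr => i _; rewrite add0n.
Qed.

End IdealPowers.

Section Chains.
Variable T : Type.
Local Open Scope nat_scope.
Implicit Types (P : (T -> Prop) -> Prop) (A B C : T -> Prop).

Definition chain P lo hi k (N : nat -> T -> Prop) : Prop :=
  (forall i, (i <= k) -> P (N i)) /\ psubset lo (N 0) /\ psubset (N k) hi /\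
  (forall i, (i < k) -> pstrict (N i) (N i.+1)).

Lemma chain0 P A : P A -> chain P A A 0 (fun _ => A).
Proof. by move=> PA; split=> [//|]; split=> [//|]; split. Qed.

Lemma chain_weaken P lo lo' hi hi' k N : psubset lo' lo -> psubset hi hi' ->
  chain P lo hi k N -> chain P lo' hi' k N.
Proof.
move=> lo'lo hihi' [PN [loN [Nhi NS]]].
by split=> //; split=> [x /lo'lo /loN //|]; split=> // x /Nhi /hihi'.
Qed.

Lemma pstrict_subset_trans A B C : pstrict A B -> psubset B C -> pstrict A C.
Proof.
by move=> [AB [x [Bx nAx]]] BC; split=> [y /AB /BC //|]; exists x; split=> //; apply: BC.
Qed.

Lemma chain_concat P (L : nat -> T -> Prop) (F : nat -> nat -> T -> Prop) k n :
  (0 < n) -> P (L k) -> (forall i, (i < k) -> chain P (L i) (L i.+1) n (F i)) ->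
  chain P (L 0) (L k) (k * n)
    (fun t => if (t %/ n < k) then F (t %/ n) (t %% n) else L k).
Proof.
move=> n_gt0 PLk HF; split; [|split; [|split]].
- move=> t _; case: ifP => // tk.
  by have [PF _] := HF _ tk; apply: PF; rewrite ltnW // ltn_pmod.
- rewrite div0n mod0n; case: ifP => [k_gt0|]; first by have [_ []] := HF _ k_gt0.
  by rewrite lt0n => /negbFE/eqP ->.
- by rewrite mulnK // ltnn.
move=> t tkn; have ik : (t %/ n < k) by rewrite ltn_divLR.
have [_ [_ [FiL Fi_strict]]] := HF _ ik; rewrite ik.
have t1E : t.+1 = (t %/ n * n + (t %% n).+1) by rewrite addnS -divn_eq.
have [jn|] := ltnP (t %% n).+1 n.
  have -> : t.+1 %/ n = t %/ n by rewrite t1E divnMDl // (divn_small jn) addn0.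
  have -> : t.+1 %% n = (t %% n).+1 by rewrite t1E modnMDl modn_small.
  by rewrite ik; apply: Fi_strict; rewrite ltn_pmod.
move=> nj; have jE : (t %% n).+1 = n by apply/eqP; rewrite eqn_leq nj ltn_pmod.
have -> : t.+1 = (t %/ n).+1 * n by rewrite t1E jE mulSn addnC.
rewrite mulnK // modnMl.
apply: (pstrict_subset_trans (Fi_strict _ (ltn_pmod t n_gt0))); rewrite jE => x /FiL.
case: ifP => [i1k|/negbT]; first by have [_ [+ _]] := HF _ i1k; apply.
by rewrite -leqNgt => ki1; rewrite (@anti_leq k (t %/ n).+1) ?ki1.
Qed.

End Chains.

Section LeftKernel.
Variable R : idomainType.
Local Notation tofrac := (@FracField.tofrac R).
Local Notation "x %:F" := (tofrac x).

Lemma exists_tofrac_div (f : {fraction R}) : exists a b, b != 0 /\ f = a%:F / b%:F.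
Proof.
elim/quotW: f => x; exists \n_x, \d_x; split; first exact: denom_ratioP.
apply/(@mulIf _ (\d_x)%:F); first by rewrite tofrac_eq0 denom_ratioP.
rewrite mulfVK ?tofrac_eq0 ?denom_ratioP //.
unlock tofrac; rewrite -[_ * _]/(FracField.mul _ _) -FracField.pi_mul /FracField.mulf.
apply/eqmodP; rewrite /= FracField.equivfE /=.
by rewrite !numden_Ratio ?mulf_neq0 ?oner_eq0 ?denom_ratioP // !mulr1 mulrC.
Qed.

Lemma tofrac_common_denom (s : seq {fraction R}) :
  exists2 d : R, d != 0 & forall f, f \in s -> exists a, d%:F * f = a%:F.
Proof.
elim: s => [|f s [d d0 Hd]]; first by exists 1; rewrite ?oner_eq0.
have [a [b [b0 ->]]] := exists_tofrac_div f.
exists (d * b) => [|g]; first by rewrite mulf_neq0.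
rewrite inE => /orP[/eqP ->|/Hd [c Hc]].
  by exists (d * a); rewrite !tofracM mulrACA divff ?tofrac_eq0 // mulr1.
by exists (b * c); rewrite tofracM mulrAC Hc tofracM mulrC.
Qed.

Lemma left_kernel_nonzero n j (A : 'M[R]_(n, j)) :
  (j < n)%N -> exists2 c : 'rV[R]_n, c != 0 & c *m A = 0.
Proof.
move=> jn; set AF := map_mx tofrac A.
have ker_neq0 : kermx AF != 0.
  rewrite kermx_eq0 /row_free; apply: contraTneq jn => <-.
  by rewrite -leqNgt rank_leq_col.
have [i Hi] : exists i, row i (kermx AF) != 0.
  apply/existsP; apply: contraR ker_neq0; rewrite negb_exists => /forallP H.
  by apply/eqP/row_matrixP => i; rewrite row0; apply/eqP; move: (H i); rewrite negbK.
set cF := row i (kermx AF).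
have cFA : cF *m AF = 0 by rewrite -row_mul mulmx_ker row0.
have [d d0 Hd] := tofrac_common_denom [seq cF 0 l | l <- enum 'I_n].
have [a Ha] := choice (fun l => Hd _ (map_f _ (mem_enum _ l))).
pose c := \row_l a l.
have cE : map_mx tofrac c = d%:F *: cF.
  by apply/rowP => l; rewrite mxE [c 0 l]mxE -Ha [RHS]mxE.
exists c.
  apply: contraNneq Hi => c0; move: cE; rewrite c0 map_mx0 => /esym/eqP.
  by rewrite scalemx_eq0 tofrac_eq0 (negbTE d0).
apply/rowP => l; apply/eqP; rewrite -tofrac_eq mxE.
have /matrixP/(_ 0 l) : map_mx tofrac (c *m A) = 0.
  by rewrite map_mxM cE -scalemxAl -/AF cFA scaler0.
by rewrite !mxE => ->; rewrite tofrac0.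
Qed.

End LeftKernel.

Section Submodules.
Variables (R : idomainType) (M : lmodType R).
Local Notation smul K := (@ideal_smul R M K).
Implicit Types (K : R -> Prop) (N Y : M -> Prop).

Lemma submodule_sum N (T : Type) (r : seq T) (P : pred T) (F : T -> M) :
  is_submodule N -> (forall i, P i -> N (F i)) -> N (\sum_(i <- r | P i) F i).
Proof. by case=> N0 ND _ HF; apply: big_ind. Qed.

Lemma ideal_smul_submodule K : is_ideal K -> is_submodule (smul K).
Proof.
case=> _ _ KM; split.
- by exists [::]; rewrite big_nil.
- move=> _ _ [s [Hs ->]] [t [Ht ->]]; exists (s ++ t); rewrite big_cat.
  by split=> // p; rewrite mem_cat => /orP[/Hs|/Ht].
- move=> r _ [s [Hs ->]]; exists [seq (r * p.1, p.2) | p <- s]; split.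
    by move=> _ /mapP[q /Hs Hq ->]; apply: KM.
  by rewrite big_map scaler_sumr; apply: eq_bigr => p _; rewrite scalerA.
Qed.

Lemma ideal_smulS K K' : psubset K K' -> psubset (smul K) (smul K').
Proof. by move=> KK' _ [s [Hs ->]]; exists s; split=> // p /Hs /KK'. Qed.

Lemma ideal_smul_scale K r z : K r -> smul K (r *: z).
Proof.
move=> Kr; exists [:: (r, z)]; rewrite big_seq1.
by split=> // p; rewrite inE => /eqP ->.
Qed.

Lemma ideal_smul_coords K m (g : 'I_m -> M) :
  is_ideal K -> (forall z, exists c : 'I_m -> R, z = \sum_i c i *: g i) ->
  forall w, smul K w -> exists2 a : 'I_m -> R, forall t, K (a t) & w = \sum_t a t *: g t.
Proof.
case=> K0 KD KM Hg _ [s [+ ->]]; elim: s => [|p s IH] Hs.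
  by exists (fun _ => 0) => //; rewrite big_nil big1 // => t _; rewrite scale0r.
rewrite big_cons; have [a Ka ->] : exists2 a : 'I_m -> R, forall t, K (a t) &
    \sum_(q <- s) q.1 *: q.2 = \sum_t a t *: g t.
  by apply: IH => q qs; apply: Hs; rewrite inE qs orbT.
have [c ->] := Hg p.2; have Kp : K p.1 by apply: Hs; rewrite inE eqxx.
exists (fun t => p.1 * c t + a t) => [t|]; first by apply: KD => //; rewrite mulrC; apply: KM.
rewrite scaler_sumr -big_split; apply: eq_bigr => t _.
by rewrite scalerDl scalerA.
Qed.

Lemma lin_indepZ n (v : 'I_n -> M) e :
  e != 0 -> lin_indep v -> lin_indep (fun i => e *: v i).
Proof.
move=> e0 Hv c Hc i; have /eqP : c i * e = 0.
  apply: (Hv (fun k => c k * e)); rewrite -[RHS]Hc.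
  by apply: eq_bigr => k _; rewrite scalerA.
by rewrite mulf_eq0 (negbTE e0) orbF => /eqP.
Qed.

Lemma span_not_lin_indep n j (u : 'I_n -> M) (y : 'I_j -> M) : (j < n)%N ->
  (forall i, exists b : 'I_j -> R, u i = \sum_t b t *: y t) -> ~ lin_indep u.
Proof.
move=> jn Hb Hu; have [b Eb] := choice Hb.
have [c c0 cB] := left_kernel_nonzero (\matrix_(i, t) b i t) jn.
apply/negP: c0; rewrite negbK; apply/eqP/rowP => i; rewrite mxE; apply: Hu i.
under eq_bigr => k _ do rewrite Eb scaler_sumr.
rewrite exchange_big big1 // => t _.
under eq_bigr => k _ do rewrite scalerA.
have /matrixP/(_ 0 t) := cB; rewrite !mxE => cBt.
rewrite -scaler_suml; suff -> : \sum_k c 0 k * b k t = 0 by rewrite scale0r.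
by rewrite -[RHS]cBt; apply: eq_bigr => k _; rewrite mxE.
Qed.

Lemma determinant_trick m (g : 'I_m -> M) Y (A : 'M[R]_m) x :
  is_submodule Y -> (forall s, Y (x *: g s - \sum_t A s t *: g t)) ->
  forall u, Y ((char_poly A).[x] *: g u).
Proof.
move=> HY Hs u; pose B := map_mx (horner_eval x) (char_poly_mx A).
have BE s : \sum_t B s t *: g t = x *: g s - \sum_t A s t *: g t.
  under eq_bigr => t _ do rewrite !mxE horner_evalE hornerD hornerN hornerMn
    hornerX hornerC scalerBl.
  rewrite sumrB (bigD1 s) //= eqxx mulr1n big1 ?addr0 // => t /negbTE.
  by rewrite eq_sym => ->; rewrite mulr0n scale0r.
have adjB t : \sum_s \adj B u s * B s t = \det B *+ (u == t).
  by have /matrixP/(_ u t) := mul_adj_mx B; rewrite !mxE.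
have : Y (\sum_s \adj B u s *: \sum_t B s t *: g t).
  by apply: submodule_sum => // s _; case: HY => _ _; apply; rewrite BE.
under eq_bigr => s _ do rewrite scaler_sumr.
rewrite exchange_big /=.
under eq_bigr => t _ do under eq_bigr => s _ do rewrite scalerA.
under eq_bigr => t _ do rewrite -scaler_suml adjB.
rewrite (bigD1 u) //= eqxx mulr1n big1 ?addr0 => [|t ut]; last first.
  by rewrite eq_sym (negbTE ut) mulr0n scale0r.
by rewrite /B det_map_mx.
Qed.

Definition prefix_span (y : nat -> M) (j : nat) : M -> Prop :=
  fun z => exists b : nat -> R, z = \sum_(i < j) b i *: y i.

Lemma prefix_span_submodule y j : is_submodule (prefix_span y j).
Proof.
split.
- by exists (fun _ => 0); rewrite big1 // => i _; rewrite scale0r.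
- move=> _ _ [b1 ->] [b2 ->]; exists (fun i => b1 i + b2 i).
  by rewrite -big_split; apply: eq_bigr => i _; rewrite scalerDl.
- move=> r _ [b ->]; exists (fun i => r * b i); rewrite scaler_sumr.
  by apply: eq_bigr => i _; rewrite scalerA.
Qed.

Lemma prefix_spanS y j : psubset (prefix_span y j) (prefix_span y j.+1).
Proof.
move=> _ [b ->]; exists (fun i => if (i < j)%N then b i else 0).
by rewrite big_ord_recr /= ltnn scale0r addr0; apply: eq_bigr => i _; rewrite ltn_ord.
Qed.

Lemma prefix_span_last y j : prefix_span y j.+1 (y j).
Proof.
exists (fun i => (i == j)%:R); rewrite big_ord_recr /= eqxx scale1r big1 ?add0r // => i _.
by rewrite (ltn_eqF (ltn_ord i)) scale0r.
Qed.

Lemma eq_prefix_span (y y' : nat -> M) j :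
  (forall i, (i < j)%N -> y i = y' i) -> prefix_span y j = prefix_span y' j.
Proof.
move=> yy'; rewrite funeqE => z; rewrite propeqE; split=> -[b ->]; exists b.
  by apply: eq_bigr => i _; rewrite yy'.
by apply: eq_bigr => i _; rewrite yy'.
Qed.

Definition smul_add_span K x y j : M -> Prop := fun w =>
  exists w1 z, [/\ smul K w1, prefix_span y j z & w = w1 + x *: z].

Lemma eq_smul_add_span K x (y y' : nat -> M) j :
  (forall i, (i < j)%N -> y i = y' i) -> smul_add_span K x y j = smul_add_span K x y' j.
Proof. by move=> yy'; rewrite /smul_add_span (eq_prefix_span yy'). Qed.

Lemma smul_add_span_submodule K x y j : is_ideal K -> is_submodule (smul_add_span K x y j).
Proof.
move=> HK; have [S0 SD SZ] := ideal_smul_submodule HK.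
have [P0 PD PZ] := prefix_span_submodule y j; split.
- by exists 0, 0; split; rewrite ?scaler0 ?addr0.
- move=> _ _ [w1 [z1 [Hw1 Hz1 ->]]] [w2 [z2 [Hw2 Hz2 ->]]].
  by exists (w1 + w2), (z1 + z2); rewrite scalerDr addrACA; split; [apply: SD|apply: PD|].
- move=> r _ [w1 [z [Hw1 Hz ->]]]; exists (r *: w1), (r *: z).
  by rewrite scalerDr !scalerA mulrC; split; [apply: SZ|apply: PZ|].
Qed.

Lemma ideal_smul_sub_smul_add_span K x y j : psubset (smul K) (smul_add_span K x y j).
Proof.
move=> w Hw; exists w, 0; rewrite scaler0 addr0; split=> //.
by case: (prefix_span_submodule y j).
Qed.

Lemma smul_add_spanS K x y j :
  psubset (smul_add_span K x y j) (smul_add_span K x y j.+1).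
Proof. by move=> _ [w1 [z [Hw1 /prefix_spanS Hz ->]]]; exists w1, z. Qed.

Lemma smul_add_span_last K x y j : is_ideal K -> smul_add_span K x y j.+1 (x *: y j).
Proof.
move=> HK; exists 0, (y j); rewrite add0r; split=> //; last exact: prefix_span_last.
by case: (ideal_smul_submodule HK).
Qed.

Lemma smul_add_span_sub K K' x y j : is_ideal K' -> psubset K K' -> K' x ->
  psubset (smul_add_span K x y j) (smul K').
Proof.
move=> HK' KK' K'x _ [w1 [z [Hw1 _ ->]]]; case: (ideal_smul_submodule HK') => _ SD _.
by apply: SD; [apply: ideal_smulS Hw1 | apply: ideal_smul_scale].
Qed.

Lemma exists_scale_notin_smul_add_span K x y n (v : 'I_n -> M) j :
  integrally_closed_ideal K -> ~ K x -> fin_gen_module M -> lin_indep v ->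
  (j < n)%N -> exists z, ~ smul_add_span K x y j (x *: z).
Proof.
move=> [HK Kcl] Kx [g Hg] Hv jn; apply: contrapT => Hall.
have {}Hall z : smul_add_span K x y j (x *: z).
  by apply: contrapT => Hz; apply: Hall; exists z.
pose G (i : 'I_(size g)) := g`_i.
have [_ _ PZ] := prefix_span_submodule y j.
have HA s : exists a : 'I_(size g) -> R,
    (forall t, K (a t)) /\ prefix_span y j (x *: G s - \sum_t a t *: G t).
  have [w1 [z [Hw1 Hz E]]] := Hall (G s).
  have [a Ka Ea] := ideal_smul_coords HK Hg Hw1.
  by exists a; split=> //; rewrite E -Ea addrC addKr; apply: PZ.
have [a Ha] := choice HA; pose A := \matrix_(s, t) a s t.
have [e0|e_neq0] := eqVneq (char_poly A).[x] 0.
  apply/Kx/Kcl/(root_char_poly_integral HK _ e0) => s t.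
  by rewrite mxE; case: (Ha s).
have eG u : prefix_span y j ((char_poly A).[x] *: G u).
  apply: determinant_trick (prefix_span_submodule y j) _ u => s.
  by under eq_bigr => t _ do rewrite mxE; case: (Ha s).
apply: (span_not_lin_indep (y := fun t : 'I_j => y t) jn _ (lin_indepZ e_neq0 Hv)) => i.
have [c ->] := Hg (v i).
have [b ->] : prefix_span y j ((char_poly A).[x] *: \sum_k c k *: G k).
  rewrite scaler_sumr; apply: submodule_sum (prefix_span_submodule y j) _ => k _.
  by rewrite scalerA mulrC -scalerA; apply: PZ.
by exists (fun t => b t).
Qed.

Lemma exists_escaping_seq K x n (v : 'I_n -> M) :
  integrally_closed_ideal K -> ~ K x -> fin_gen_module M -> lin_indep v ->
  exists y : nat -> M, forall j, (j < n)%N -> ~ smul_add_span K x y j (x *: y j).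
Proof.
move=> HK Kx Mfg Hv; suff /(_ n (leqnn n)) : forall l, (l <= n)%N ->
    exists y : nat -> M, forall j, (j < l)%N -> ~ smul_add_span K x y j (x *: y j) by [].
elim=> [_|l IH ln]; first by exists (fun _ => 0).
have [y Hy] := IH (ltnW ln).
have [z Hz] := exists_scale_notin_smul_add_span y HK Kx Mfg Hv ln.
exists (fun i => if i == l then z else y i) => j; rewrite ltnS leq_eqVlt.
case/orP=> [/eqP ->|jl]; rewrite ?eqxx ?(ltn_eqF jl) (eq_smul_add_span _ _ (y' := y)).
- exact: Hz.
- by move=> i il; rewrite ltn_eqF.
- exact: Hy.
- by move=> i ij; rewrite ltn_eqF // (ltn_trans ij jl).
Qed.

Lemma module_chain_of_ideal_step K K' x n (v : 'I_n -> M) :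
  integrally_closed_ideal K -> is_ideal K' -> psubset K K' -> K' x -> ~ K x ->
  fin_gen_module M -> lin_indep v ->
  exists N : nat -> M -> Prop, chain (@is_submodule R M) (smul K) (smul K') n N.
Proof.
move=> HK HK' KK' K'x Kx Mfg Hv.
have [y Hy] := exists_escaping_seq HK Kx Mfg Hv.
exists (smul_add_span K x y); split; [|split; [|split]].
- by move=> j _; apply: smul_add_span_submodule; case: HK.
- exact: ideal_smul_sub_smul_add_span.
- exact: smul_add_span_sub.
move=> j jn; split; first exact: smul_add_spanS.
exists (x *: y j); split; last exact: Hy.
by apply: smul_add_span_last; case: HK.
Qed.

Lemma module_chain_of_ideal_chain J I k (C : nat -> R -> Prop) n (v : 'I_n -> M) :
  (0 < n)%N -> fin_gen_module M -> lin_indep v ->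
  chain (@integrally_closed_ideal R) J I k C ->
  exists N : nat -> M -> Prop, chain (@is_submodule R M) (smul J) (smul I) (k * n) N.
Proof.
move=> n_gt0 Mfg Hv [HC [JC0 [CkI C_strict]]].
have Fex i : exists Fi : nat -> M -> Prop, (i < k)%N ->
    chain (@is_submodule R M) (smul (C i)) (smul (C i.+1)) n Fi.
  have [ik|_] := ltnP i k; last by exists (fun _ _ => True).
  have [CC' [x [C'x nCx]]] := C_strict _ ik.
  have [N HN] := module_chain_of_ideal_step (HC _ (ltnW ik)) (HC _ ik).1 CC' C'x nCx Mfg Hv.
  by exists N.
have [F HF] := choice Fex.
have Ck_submodule : is_submodule (smul (C k)).
  by apply: ideal_smul_submodule; case: (HC _ (leqnn k)).
eexists; apply: chain_weaken (ideal_smulS JC0) (ideal_smulS CkI) _.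
exact: (chain_concat (L := fun i => smul (C i)) n_gt0 Ck_submodule HF).
Qed.

End Submodules.

Section NatSup.
Local Open Scope classical_set_scope.
Implicit Types P : nat -> Prop.

Lemma bounded_nat_max P N k0 : P k0 -> (forall k, P k -> (k <= N)%N) ->
  exists k, P k /\ forall k', P k' -> (k' <= k)%N.
Proof.
move=> Pk0 PN; have exP : exists k, `[< P k >] by exists k0; apply/asboolP.
have ubP k : `[< P k >] -> (k <= N)%N by move/asboolP/PN.
by case: (ex_maxnP exP ubP) => k /asboolP Pk Hk; exists k; split=> // k' /asboolP/Hk.
Qed.

Lemma nat_sup_nonempty P k : P k -> [set ((n%:R : rat)%:E)%E | n in P] != set0.
Proof. by move=> Pk; apply/set0P; exists ((k%:R : rat)%:E)%E, k. Qed.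

Lemma nat_sup_max P k : P k -> (forall k', P k' -> (k' <= k)%N) ->
  nat_sup P = ((k%:R : rat)%:E)%E.
Proof.
move=> Pk Hk.
have supk : supremums [set ((n%:R : rat)%:E)%E | n in P] ((k%:R : rat)%:E)%E.
  by split=> [_ [k' /Hk Pk' <-]|u]; [rewrite lee_fin ler_nat | apply; exists k].
rewrite /nat_sup /ereal_sup /supremum (negbTE (nat_sup_nonempty Pk)).
by case: xgetP => [y -> supy|/(_ _ supk)//]; apply: is_subset1_supremums supy supk.
Qed.

Lemma nat_sup_unbounded P k : P k -> ~ (exists N, forall k', P k' -> (k' <= N)%N) ->
  nat_sup P = +oo%E.
Proof.
move=> Pk unbdd; have supoo : supremums [set ((n%:R : rat)%:E)%E | n in P] +oo%E.
  split=> [u _|u ub]; first exact: leey.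
  case: u ub => [r|//|] ub; last first.
    by have := ub _ (ex_intro2 _ _ k Pk erefl); rewrite leeNy_eq.
  exfalso; apply: unbdd; exists (Num.bound `|r|) => k' Pk'.
  have := ub _ (ex_intro2 _ _ k' Pk' erefl).
  rewrite lee_fin => /le_trans/(_ (ler_norm r)).
  by move=> /le_lt_trans/(_ (archi_boundP (normr_ge0 r))); rewrite ltr_nat => /ltnW.
rewrite /nat_sup /ereal_sup /supremum (negbTE (nat_sup_nonempty Pk)).
by case: xgetP => [y -> supy|/(_ _ supoo)//]; apply: is_subset1_supremums supy supoo.
Qed.

Lemma nat_sup_ge P k : P k -> (((k%:R : rat)%:E) <= nat_sup P)%E.
Proof.
move=> Pk; have [[N PN]|unbdd] := pselect (exists N, forall k', P k' -> (k' <= N)%N).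
  have [m [Pm Hm]] := bounded_nat_max Pk PN.
  by rewrite (nat_sup_max Pm Hm) lee_fin ler_nat Hm.
by rewrite (nat_sup_unbounded Pk unbdd) leey.
Qed.

Lemma nat_sup_bounded P (r : rat) k0 : P k0 -> (forall k, P k -> (k%:R : rat) <= r) ->
  exists k, P k /\ nat_sup P = ((k%:R : rat)%:E)%E.
Proof.
move=> Pk0 Pr; have r_ge0 : 0 <= r by apply: le_trans (Pr _ Pk0).
have PN k : P k -> (k <= Num.bound r)%N.
  move=> /Pr/le_lt_trans/(_ (archi_boundP r_ge0)); by rewrite ltr_nat => /ltnW.
have [k [Pk Hk]] := bounded_nat_max Pk0 PN.
by exists k; split=> //; apply: nat_sup_max.
Qed.

Lemma nat_sup_mul_le (P Q : nat -> Prop) (q : \bar rat) : P 0%N -> Q 0%N ->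
  (forall k n, P k -> Q n -> (((k * n)%N%:R : rat)%:E <= q)%E) ->
  (nat_sup P * nat_sup Q <= q)%E.
Proof.
move=> P0 Q0 Hq; have := Hq _ _ P0 Q0; rewrite mul0n.
case: q Hq => [r Hq|_ _|//]; last exact: leey.
rewrite lee_fin => r_ge0.
have [[n [Qn n_gt0]]|] := pselect (exists n, Q n /\ (0 < n)%N); last first.
  move=> noQ; rewrite (@nat_sup_max Q 0%N) ?mule0 ?lee_fin // => k Qk.
  by rewrite leqNgt; apply/negP => k_gt0; apply: noQ; exists k.
have [k [Pk ->]] : exists k, P k /\ nat_sup P = ((k%:R : rat)%:E)%E.
  apply: (nat_sup_bounded P0) => k Pk; have := Hq _ _ Pk Qn; rewrite lee_fin.
  by apply: le_trans; rewrite ler_nat leq_pmulr.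
have [->|k_gt0] := posnP k; first by rewrite mul0e lee_fin.
have [m [Qm ->]] : exists m, Q m /\ nat_sup Q = ((m%:R : rat)%:E)%E.
  apply: (nat_sup_bounded Q0) => m Qm; have := Hq _ _ Pk Qm; rewrite lee_fin.
  by apply: le_trans; rewrite ler_nat leq_pmull.
by rewrite -EFinM -natrM; apply: Hq.
Qed.

End NatSup.

Theorem corollary2p2 (R : idomainType) (m J I : R -> Prop) (M : lmodType R) :
  noetherian R -> local_with m ->
  integrally_closed_ideal J -> m_primary m J ->
  is_ideal I -> psubset J I ->
  fin_gen_module M -> torsion_free M ->
  (icl_chain_length I J * module_rank M <= quot_length (@ideal_smul R M I) (@ideal_smul R M J))%E.
Proof.
move=> _ _ HJ _ _ JI Mfg _; apply: nat_sup_mul_le.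
- by exists (fun _ => J); apply: chain_weaken JI (chain0 HJ).
- by exists (fun i : 'I_0 => 0) => c _ [].
move=> k n [C HC] [v Hv]; apply: nat_sup_ge.
have [->|n_gt0] := posnP n.
  rewrite muln0; exists (fun _ => @ideal_smul R M J).
  apply: chain_weaken (fun _ => id) (ideal_smulS JI) (chain0 _).
  by apply: ideal_smul_submodule; case: HJ.
exact: module_chain_of_ideal_chain n_gt0 Mfg Hv HC.
Qed.
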